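(* For any Kleinian group $\Gamma$, the set $C_\Gamma=\{\psi\in\mathrm{PSL}_2\mathbb{C}\;|\;\psi\Gamma\psi^{-1}\cap\Gamma\text{ is nonelementary}\}$ is countable.
   Context: A Kleinian group is a discrete torsion-free subgroup of $\mathrm{PSL}_2\mathbb{C}$; it is elementary if its limit set has at most two points (equivalently, it is abelian), and nonelementary otherwise. *)

From mathcomp Require Import all_boot all_order all_algebra.
From mathcomp Require Import complex.
From mathcomp Require Import classical_sets cardinality reals Rstruct.
Import Order.TTheory GRing.Theory Num.Theory.
Local Open Scope ring_scope.
Local Open Scope complex_scope.
Local Open Scope classical_set_scope.

Definition CC : Type := (Rdefinitions.R)[i].

(* A subgroup of PSL_2(C) is represented by its
   full preimage in SL_2(C), i.e. a subgroup of SL_2(C) containing -1. *)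
Definition M2 : Type := 'M[CC]_2.

Definition SL2 (A : M2) : Prop := \det A = 1.

Definition psl_trivial (A : M2) : Prop := A = 1%:M \/ A = - 1%:M.

Definition psl_subgroup (G : set M2) : Prop :=
  [/\ (forall A, G A -> SL2 A),
      G 1%:M,
      (forall A B, G A -> G B -> G (A *m B)),
      (forall A, G A -> G (invmx A)) &
      (forall A, G A -> G (- A))].

(* discreteness: the identity is isolated (entrywise neighbourhood in
   SL_2(C); since G is closed under -1 this is discreteness in PSL_2(C)) *)
Definition psl_discrete (G : set M2) : Prop :=
  exists e : Rdefinitions.R, 0 < e /\
    forall A, G A -> (forall i j, `|A i j - (1%:M : M2) i j| < e%:C) ->
      psl_trivial A.

Definition psl_torsion_free (G : set M2) : Prop :=
  forall (A : M2) (n : nat), G A -> (0 < n)%N -> psl_trivial (A ^+ n) ->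
    psl_trivial A.

Definition kleinian (G : set M2) : Prop :=
  [/\ psl_subgroup G, psl_discrete G & psl_torsion_free G].

Definition psl_abelian (G : set M2) : Prop :=
  forall A B, G A -> G B -> A *m B = B *m A \/ A *m B = - (B *m A).

(* per the context: a Kleinian group is elementary iff it is abelian *)
Definition elementary (G : set M2) : Prop := psl_abelian G.
Definition nonelementary (G : set M2) : Prop := ~ elementary G.

Definition conjugate (psi : M2) (G : set M2) : set M2 :=
  [set psi *m A *m invmx psi | A in G].

(* C_Gamma, as a set of representatives in SL_2(C) *)
Definition C_set (G : set M2) : set M2 :=
  [set psi | SL2 psi /\ nonelementary (conjugate psi G `&` G)].

From mathcomp Require Import all_boot all_order all_algebra.
From mathcomp Require Import boolp classical_sets cardinality complex reals Rstruct.
From mathcomp Require Import ring lra.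
Import Order.TTheory GRing.Theory Num.Theory Normc.

(* A discrete subgroup G of SL_2(C) is countable: if the entries of A^-1 are
   bounded by N and A, B in G have the same entries after rounding to a grid of
   mesh about e/(4N), then A^-1 B is e-close to the identity, hence A^-1 B = +-1.
   For psi in C_Gamma choose A, B in Gamma such that X = psi A psi^-1 and
   Y = psi B psi^-1 lie in Gamma and do not commute.  If phi yields the same
   quadruple (A, B, X, Y), then psi^-1 phi centralises A and B; since the
   centraliser of a non-scalar 2x2 matrix g is the span of g and 1, and A, B do
   not commute, psi^-1 phi is a scalar of determinant 1, i.e. phi = +-psi.
   So C_Gamma maps to the countable set Gamma^4 with fibres of size at most 2. *)
Set Implicit Arguments.
Unset Strict Implicit.
Unset Printing Implicit Defensive.
Local Open Scope ring_scope.
Local Open Scope complex_scope.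
Local Open Scope classical_set_scope.

Lemma countable_finite_fibers (T V : Type) (S : set T) (U : set V)
    (fiber : T -> V -> Prop) :
  countable U -> (forall x, S x -> exists2 u, U u & fiber x u) ->
  (forall u, U u -> finite_set [set x | S x /\ fiber x u]) ->
  countable S.
Proof.
move=> cU cover finU.
have sub : S `<=` \bigcup_(u in U) [set x | S x /\ fiber x u].
  by move=> x Sx; have [u Uu ?] := cover x Sx; exists u.
apply: (sub_countable (subset_card_le sub)); apply: bigcup_countable => // u Uu.
exact/finite_set_countable/finU.
Qed.

Lemma finite_set_sign (V : zmodType) (S : set V) :
  (forall x y, S x -> S y -> y = x \/ y = - x) -> finite_set S.
Proof.
move=> sign; have [[x0 Sx0]|S0] := pselect (exists x0, S x0).
  apply: (sub_finite_set _ (finite_set2 x0 (- x0))) => y Sy.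
  by have [->|->] := sign _ _ Sx0 Sy; [left|right].
suff -> : S = set0 by [].
by apply/seteqP; split => // x Sx; apply: S0; exists x.
Qed.

Section Matrix22.
Variable F : fieldType.
Implicit Types A B g psi phi : 'M[F]_2.

Lemma ord2P (i : 'I_2) : i = ord0 \/ i = ord_max.
Proof. by case: i => [[|[|//]]] Hi; [left|right]; apply: val_inj. Qed.

Lemma mulmx2E A B i j :
  (A *m B) i j = A i ord0 * B ord0 j + A i ord_max * B ord_max j.
Proof.
rewrite mxE !big_ord_recl big_ord0 addr0; congr (_ + _ * _).
  by congr (A i _); apply: val_inj.
by congr (B _ j); apply: val_inj.
Qed.

Lemma mx2_eq A B :
  [/\ A ord0 ord0 = B ord0 ord0, A ord0 ord_max = B ord0 ord_max,
      A ord_max ord0 = B ord_max ord0 & A ord_max ord_max = B ord_max ord_max] ->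
  A = B.
Proof.
case=> e00 e01 e10 e11; apply/matrixP => i j.
by case: (ord2P i) => ->; case: (ord2P j) => ->.
Qed.

Lemma centralizer_mx2 g A : ~~ is_scalar_mx g -> comm_mx g A ->
  exists x y, A = x *: g + y%:M.
Proof.
move=> gNscalar gA.
set a00 : F := A ord0 ord0; set a01 : F := A ord0 ord_max.
set a10 : F := A ord_max ord0; set a11 : F := A ord_max ord_max.
set g00 : F := g ord0 ord0; set g01 : F := g ord0 ord_max.
set g10 : F := g ord_max ord0; set g11 : F := g ord_max ord_max.
have gAE i j : (g *m A) i j = (A *m g) i j by rewrite gA.
move: (gAE ord0 ord0) (gAE ord0 ord_max) (gAE ord_max ord0).
rewrite !mulmx2E -/a00 -/a01 -/a10 -/a11 -/g00 -/g01 -/g10 -/g11 => e00 e01 e10.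
have eq_of_sub_eq (a b c d : F) : c - d = a - b -> a = b -> c = d.
  by move=> cdE abE; apply/subr0_eq; rewrite cdE abE subrr.
have c00 : g01 * a10 = a01 * g10 by apply: (eq_of_sub_eq _ _ _ _ _ e00); ring.
have c01 : a01 * (g00 - g11) = g01 * (a00 - a11).
  by apply: (eq_of_sub_eq _ _ _ _ _ e01); ring.
have c10 : g10 * (a00 - a11) = a10 * (g00 - g11).
  by apply: (eq_of_sub_eq _ _ _ _ _ e10); ring.
suff : exists x, [/\ x * g01 = a01, x * g10 = a10 & x * (g00 - g11) = a00 - a11].
  case=> x [x01 x10 xd]; exists x, (a00 - x * g00).
  apply: mx2_eq; rewrite !mxE /= ?mulr1n ?mulr0n ?addr0.
  rewrite -/a00 -/a01 -/a10 -/a11 -/g00 -/g01 -/g10 -/g11; split=> //.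
  - by rewrite addrC subrK.
  - by apply: (eq_of_sub_eq _ _ _ _ _ xd); ring.
have [g01_0|g01_neq0] := eqVneq g01 0; last first.
  exists (a01 / g01); split; apply: (mulfI g01_neq0);
    by rewrite ?c00 -?c01; field.
have [g10_0|g10_neq0] := eqVneq g10 0; last first.
  exists (a10 / g10); split; apply: (mulfI g10_neq0);
    by rewrite ?[g10 * a01]mulrC -?c00 ?c10; field.
have d_neq0 : g00 - g11 != 0.
  apply: contra gNscalar; rewrite subr_eq0 => /eqP gdiag.
  apply/is_scalar_mxP; exists g00; apply: mx2_eq.
  by rewrite !mxE /= ?mulr1n ?mulr0n -/g00 -/g01 -/g10 -/g11 g01_0 g10_0 gdiag.
have a01_0 : a01 = 0.
  by apply/eqP; rewrite -(mulIr_eq0 _ (mulIf d_neq0)) c01 g01_0 mul0r.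
have a10_0 : a10 = 0.
  by apply/eqP; rewrite -(mulIr_eq0 _ (mulIf d_neq0)) -c10 g10_0 mul0r.
exists ((a00 - a11) / (g00 - g11)).
by rewrite g01_0 g10_0 a01_0 a10_0 mulr0 divfK.
Qed.

Lemma centralizer_nonscalar_comm g A B : ~~ is_scalar_mx g ->
  comm_mx g A -> comm_mx g B -> comm_mx A B.
Proof.
move=> gNscalar gA gB.
have [x [y ->]] := centralizer_mx2 gNscalar gA.
have [x' [y' ->]] := centralizer_mx2 gNscalar gB.
have gpoly a b : comm_mx g (a *: g + b%:M).
  by apply: comm_mxD; [rewrite /comm_mx -scalemxAl -scalemxAr | exact: comm_mx_scalar].
apply: comm_mxD; last exact: comm_mx_scalar.
by rewrite /comm_mx -scalemxAl -scalemxAr (gpoly x y).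
Qed.

Lemma comm_mx_of_conj_eq psi phi A : psi \in unitmx -> phi \in unitmx ->
  psi *m A *m invmx psi = phi *m A *m invmx phi -> comm_mx (invmx psi *m phi) A.
Proof.
move=> psi_unit phi_unit conjA; rewrite /comm_mx -mulmxA.
have -> : phi *m A = psi *m A *m invmx psi *m phi by rewrite conjA mulmxKV.
by rewrite !mulmxA mulVmx // mul1mx.
Qed.

Lemma comm_mx_conj psi A B : psi \in unitmx -> comm_mx A B ->
  comm_mx (psi *m A *m invmx psi) (psi *m B *m invmx psi).
Proof.
move=> psi_unit AB; rewrite /comm_mx !mulmxA !mulmxKV //.
by rewrite -(mulmxA psi A) -(mulmxA psi B) AB.
Qed.

Lemma conj_eq_scale psi phi A B : psi \in unitmx -> phi \in unitmx ->
  psi *m A *m invmx psi = phi *m A *m invmx phi ->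
  psi *m B *m invmx psi = phi *m B *m invmx phi ->
  ~ comm_mx A B -> exists p, phi = p *: psi.
Proof.
move=> psi_unit phi_unit conjA conjB ABncomm.
have [/is_scalar_mxP[p gE]|gNscalar] := boolP (is_scalar_mx (invmx psi *m phi)).
  by exists p; rewrite -mul_mx_scalar -gE mulKVmx.
by case: ABncomm; apply: (centralizer_nonscalar_comm gNscalar);
  apply: comm_mx_of_conj_eq.
Qed.

Lemma det_scale_sign psi p : \det psi = 1 -> \det (p *: psi) = 1 ->
  p = 1 \/ p = -1.
Proof.
move=> det_psi; rewrite detZ det_psi mulr1 => /eqP.
by rewrite sqrf_eq1 => /orP[]/eqP; [left|right].
Qed.
End Matrix22.

Section ComplexGrid.
Variable R : realType.
Implicit Types (x y s : R) (z : R[i]).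

Lemma normc_ReIm z : normc z <= `|complex.Re z| + `|complex.Im z|.
Proof.
case: z => a b /=; rewrite -[leRHS]ger0_norm ?addr_ge0 // -sqrtr_sqr.
rewrite ler_sqrt ?sqr_ge0 // sqrrD !real_normK ?num_real //.
by rewrite lerD2r lerDl mulrn_wge0 // mulr_ge0.
Qed.

Lemma normc_ge0 z : 0 <= normc z.
Proof. by case: z => a b; apply: sqrtr_ge0. Qed.

Lemma normcE z : `|z| = (normc z)%:C.
Proof. by case: z => a b; rewrite normc_def. Qed.

Lemma floor_eq_dist x y s : 0 < s ->
  Num.floor (x * s) = Num.floor (y * s) -> `|x - y| * s < 1.
Proof.
move=> s_gt0 xy_floor.
have xlo := floor_le (x * s); have xhi := floorD1_gt (x * s).
have ylo := floor_le (y * s); have yhi := floorD1_gt (y * s).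
rewrite xy_floor intrD in xlo xhi; rewrite intrD in yhi.
rewrite -(gtr0_norm s_gt0) -normrM ltr_norml; apply/andP; split; lra.
Qed.

Definition grid m n s (A : 'M[R[i]]_(m, n)) : 'M[int]_(m, n) * 'M[int]_(m, n) :=
  (\matrix_(i, j) Num.floor (complex.Re (A i j) * s),
   \matrix_(i, j) Num.floor (complex.Im (A i j) * s)).

Lemma grid_eq_normc_lt m n s (A B : 'M[R[i]]_(m, n)) i j : 0 < s ->
  grid s A = grid s B -> normc (A i j - B i j) * s < 2.
Proof.
move=> s_gt0 [/matrixP/(_ i j) ReAB /matrixP/(_ i j) ImAB].
rewrite !mxE in ReAB ImAB.
have := floor_eq_dist s_gt0 ReAB; have := floor_eq_dist s_gt0 ImAB.
have := ler_wpM2r (ltW s_gt0) (normc_ReIm (A i j - B i j)).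
rewrite raddfB [complex.Im _]raddfB /= mulrDl; lra.
Qed.

Lemma normc_mulmx_le m n p (M : 'M[R[i]]_(m, n)) (D : 'M[R[i]]_(n, p)) i j :
  normc ((M *m D) i j) <= \sum_k normc (M i k) * normc (D k j).
Proof.
rewrite mxE; elim/big_ind2: _ => [|z1 r1 z2 r2 le1 le2|k _].
- by rewrite normc0.
- exact: le_trans (le_normcD _ _) (lerD le1 le2).
- by rewrite normcM.
Qed.

Lemma exists_nat_ub (I : finType) (f : I -> R) :
  exists N : nat, forall i, f i <= N%:R.
Proof.
exists (\max_i (Num.truncn (f i)).+1)%N => i.
apply: ltW; apply: lt_le_trans (truncnS_gt _) _; rewrite ler_nat.
exact: (leq_bigmax i).
Qed.

End ComplexGrid.

Lemma unitmx_SL2 A : SL2 A -> A \in unitmx.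
Proof. by rewrite unitmxE => ->; rewrite unitr1. Qed.

Definition grid_scale (e : Rdefinitions.R) (N : nat) : Rdefinitions.R :=
  4 * (N%:R + 1) / e.

Lemma grid_fiber_sign (G : set M2) (e : Rdefinitions.R) N A B :
  psl_subgroup G -> 0 < e ->
  (forall C, G C -> (forall i j, `|C i j - (1%:M : M2) i j| < e%:C) ->
     psl_trivial C) ->
  G A -> G B -> (forall i j, normc (invmx A i j) <= N%:R) ->
  grid (grid_scale e N) A = grid (grid_scale e N) B -> B = A \/ B = - A.
Proof.
move=> [GSL _ GM GV _] e_gt0 Gdisc GA GB Ainv_le gridAB.
set s := grid_scale e N.
have N_ge0 : 0 <= N%:R :> Rdefinitions.R by rewrite ler0n.
have s_gt0 : 0 < s.
  by rewrite /s /grid_scale divr_gt0 // mulr_gt0 //; lra.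
have A_unit := unitmx_SL2 (GSL _ GA).
have BA_close k j : normc ((B - A) k j) * s < 2.
  by rewrite !mxE; apply: grid_eq_normc_lt s_gt0 (esym gridAB).
have near1 i j : `|(invmx A *m B) i j - (1%:M : M2) i j| < e%:C.
  have -> : (invmx A *m B) i j - (1%:M : M2) i j = (invmx A *m (B - A)) i j.
    by rewrite mulmxBr mulVmx // !mxE.
  rewrite normcE ltcR -(ltr_pM2r s_gt0).
  apply: le_lt_trans (ler_wpM2r (ltW s_gt0) (normc_mulmx_le _ _ _ _)) _.
  rewrite mulr_suml; apply: (@le_lt_trans _ _ (\sum_(k < 2) N%:R * 2)).
    apply: ler_sum => k _; rewrite -mulrA.
    apply: ler_pM; [exact: normc_ge0 | exact: mulr_ge0 (normc_ge0 _) (ltW s_gt0)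
                   | exact: Ainv_le | exact: ltW].
  rewrite !big_ord_recl big_ord0 /s /grid_scale mulrCA mulfV ?gt_eqF //; lra.
have [C1|Cm1] := Gdisc _ (GM _ _ (GV _ GA) GB) near1.
- by left; rewrite -(mulKVmx A_unit B) C1 mulmx1.
- by right; rewrite -(mulKVmx A_unit B) Cm1 mulmxN mulmx1.
Qed.

Lemma countable_discrete_subgroup (G : set M2) :
  psl_subgroup G -> psl_discrete G -> countable G.
Proof.
move=> Gsub [e [e_gt0 Gdisc]].
apply: (@countable_finite_fibers _ _ G [set: nat * ('M[int]_2 * 'M[int]_2)]
  (fun A u => (forall i j, normc (invmx A i j) <= u.1%:R) /\
              u.2 = grid (grid_scale e u.1) A)).
- exact: countableP.
- move=> A _.
  have [N Ainv_le] := exists_nat_ub (fun ij : 'I_2 * 'I_2 => normc (invmx A ij.1 ij.2)).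
  by exists (N, grid (grid_scale e N) A) => //; split=> // i j; apply: (Ainv_le (i, j)).
- move=> [N g] _; apply: finite_set_sign => A B [GA [Ainv_le gA]] [GB [_ gB]].
  by apply: (grid_fiber_sign Gsub e_gt0 Gdisc GA GB Ainv_le); rewrite -gA -gB.
Qed.

Lemma nonelementary_noncomm (H : set M2) :
  nonelementary H -> exists X Y, [/\ H X, H Y & ~ comm_mx X Y].
Proof.
move=> Hnab; apply: contrapT => noX; apply: Hnab => X Y HX HY; left.
by apply: contrapT => XY; apply: noX; exists X, Y.
Qed.

Theorem mainTheorem19 (Gamma : set M2) :
  kleinian Gamma -> countable (C_set Gamma).
Proof.
move=> [Gsub Gdisc _].
have cGamma := countable_discrete_subgroup Gsub Gdisc.
apply: (@countable_finite_fibers _ _ _ (Gamma `*` Gamma `*` Gamma `*` Gamma)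
  (fun psi u => [/\ psi *m u.1.1.1 *m invmx psi = u.1.2,
                    psi *m u.1.1.2 *m invmx psi = u.2 & ~ comm_mx u.1.2 u.2])).
- by do 3 apply: countableX => //.
- move=> psi [_ /nonelementary_noncomm[X [Y [[[A GA AX] GX] [[B GB BY] GY] XY]]]].
  by exists (A, B, X, Y).
- move=> [[[A B] X] Y] _; apply: finite_set_sign.
  move=> psi phi [[det_psi _] [psiA psiB XY]] [[det_phi _] [phiA phiB _]].
  have psi_unit := unitmx_SL2 det_psi.
  have AB : ~ comm_mx A B.
    by apply: contra_not XY; rewrite -psiA -psiB; apply: comm_mx_conj.
  have [p phiE] := conj_eq_scale psi_unit (unitmx_SL2 det_phi)
    (etrans psiA (esym phiA)) (etrans psiB (esym phiB)) AB.
  rewrite phiE in det_phi.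
  have [p1|pm1] := det_scale_sign det_psi det_phi.
  - by left; rewrite phiE p1 scale1r.
  - by right; rewrite phiE pm1 scaleN1r.
Qed.
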